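(* Let $k,s$ be integers with $k\geq 3$ and $s\geq 2$. Then: (1) $\mathrm{GR}_{3}(\vee_2:\mathcal{C}_s)=2s-1$. (2) The pair $(\vee_2,\mathcal{C}_s)$ is $(\vee_2:\mathcal{C}_s)_4$-good for $s\in\{2,3\}$, and $\mathrm{GR}_{4}(\vee_2:\mathcal{C}_s)=s$ for all $s\geq 4$. (3) If $k\geq 5$, the pair $(\vee_2,\mathcal{C}_s)$ is $(\vee_2:\mathcal{C}_s)_k$-good.
   Context: $\mathcal{B}_N$ denotes the Boolean lattice of all subsets of $[N]$ ordered by inclusion. For posets $\mathcal{P},\mathcal{Q}$, an induced copy of $\mathcal{P}$ in $\mathcal{Q}$ is the image of an injection $f:\mathcal{P}\to\mathcal{Q}$ with $f(X)\le f(Y)$ iff $X\le Y$. $\mathcal{C}_t$ is the $t$-element chain. $\vee_2$ is the poset on three elements $X_0,X_1,X_2$ with $X_0<X_1$, $X_0<X_2$ and $X_1,X_2$ incomparable. A $k$-coloring of $\mathcal{B}_N$ is exact if it uses colors from $[k]$ and every color is used at least once. Monochromatic: all sets share one color; rainbow: all sets have pairwise distinct colors. The pair $(\mathcal{Q},\mathcal{P})$ is $(\mathcal{Q}:\mathcal{P})_k$-good if for every positive integer $N$, every exact $k$-coloring of $\mathcal{B}_N$ contains a rainbow induced copy of $\mathcal{Q}$ or a monochromatic induced copy of $\mathcal{P}$. For a pair that is not good, $\mathrm{GR}_k(\mathcal{Q}:\mathcal{P})$ is the smallest integer $n$ such that for every $N\ge n$, every exact $k$-coloring of $\mathcal{B}_N$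 contains a rainbow induced copy of $\mathcal{Q}$ or a monochromatic induced copy of $\mathcal{P}$. *)

From mathcomp Require Import all_boot.
Set Implicit Arguments. Unset Strict Implicit. Unset Printing Implicit Defensive.

Definition BL (N : nat) := {set 'I_N}.

(* A finite poset is given by a carrier finType T and its order relation le.
   An induced copy of (T, le) in B_N is the image of an injection f with
   f X \subset f Y  iff  le X Y. *)
Definition induced_copy (T : finType) (le : rel T) (N : nat) (f : T -> {set 'I_N}) : Prop :=
  injective f /\ forall X Y : T, (f X \subset f Y) = le X Y.

Definition chain_le (t : nat) : rel 'I_t := fun x y => (x <= y)%N.

(* The poset V_2 on 'I_3: X_0 = element 0 below X_1 = 1 and X_2 = 2, which are incomparable. *)
Definition vee2_le : rel 'I_3 := fun x y => (x == y) || (nat_of_ord x == 0%N).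

(* An exact k-coloring of B_N: colors from 'I_k (a relabeling of [k]), every color used. *)
Definition exact_coloring (k N : nat) (c : {set 'I_N} -> 'I_k) : Prop :=
  forall i : 'I_k, exists A : {set 'I_N}, c A = i.

Definition rainbow_copy (k N : nat) (c : {set 'I_N} -> 'I_k)
  (T : finType) (le : rel T) : Prop :=
  exists f : T -> {set 'I_N}, induced_copy le f /\ injective (fun x => c (f x)).

Definition mono_copy (k N : nat) (c : {set 'I_N} -> 'I_k)
  (T : finType) (le : rel T) : Prop :=
  exists f : T -> {set 'I_N}, induced_copy le f /\ forall x y, c (f x) = c (f y).

Definition GR_prop (k : nat) (TQ : finType) (leQ : rel TQ) (TP : finType) (leP : rel TP)
  (N : nat) : Prop :=
  forall c : {set 'I_N} -> 'I_k, exact_coloring c ->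
    rainbow_copy c leQ \/ mono_copy c leP.

Definition good (k : nat) (TQ : finType) (leQ : rel TQ) (TP : finType) (leP : rel TP) : Prop :=
  forall N : nat, (0 < N)%N -> GR_prop k leQ leP N.

Definition GR_eq (k : nat) (TQ : finType) (leQ : rel TQ) (TP : finType) (leP : rel TP)
  (n : nat) : Prop :=
  ~ good k leQ leP /\
  (forall N, (n <= N)%N -> GR_prop k leQ leP N) /\
  (forall m, (forall N, (m <= N)%N -> GR_prop k leQ leP N) -> (n <= m)%N).

(* Without a rainbow vee, two sets whose colours differ from each other and
   from the colour of the empty set are comparable.  Pushing this, at most two
   such colours occur below the top set, which settles k >= 5; and once two of
   them occur, every non-top set not coloured like the empty set contains one
   common point y, so the sets avoiding y form long chains coloured like the
   empty set.  For k = 3 the remaining case is a maximal chain using only two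
   colours below the top, where pigeonhole applies.  The lower bounds colour by
   size (k = 3) and by the position relative to a fixed point (k = 4), with the
   top set alone in its colour. *)

From mathcomp Require Import all_boot zify.
From Stdlib Require Import Classical_Prop.
Set Implicit Arguments. Unset Strict Implicit. Unset Printing Implicit Defensive.

Lemma setTPn (T : finType) (A : {set T}) : reflect (exists x, x \notin A) (A != setT).
Proof.
rewrite -subTset; apply: (iffP subsetPn) => [[x _ xA]|[x xA]]; by exists x.
Qed.

Lemma card_lt_nontop N (X : {set 'I_N}) : X != setT -> #|X| < N.
Proof.
by move=> XT; have := proper_card (A := X) (B := setT); rewrite cardsT card_ord properT; apply.
Qed.

Lemma subsetU1_notin (T : finType) x (A B : {set T}) :
  x \notin A -> (A \subset x |: B) = (A \subset B).
Proof.
move=> xA; apply/idP/idP => [/subsetP sAxB|sAB]; last exact: subset_trans sAB (subsetU1 x B).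
apply/subsetP => z zA; move: (sAxB z zA); rewrite in_setU1 => /predU1P[zx|//].
by move: xA; rewrite -zx zA.
Qed.

Lemma imset_subset_inj (aT rT : finType) (h : aT -> rT) (A B : {set aT}) :
  injective h -> (h @: A \subset h @: B) = (A \subset B).
Proof.
move=> h_inj; apply/idP/idP => [/subsetP sAB|]; last exact: imsetS.
by apply/subsetP => x xA; rewrite -(mem_imset _ _ h_inj) sAB // mem_imset.
Qed.

Lemma embedding_inj (T aT : finType) (le : rel T) (f : T -> {set aT}) :
  antisymmetric le -> (forall x y, (f x \subset f y) = le x y) -> injective f.
Proof. by move=> le_anti f_sub x y fxy; apply: le_anti; rewrite -!f_sub fxy subxx. Qed.

Lemma chain_le_anti s : antisymmetric (@chain_le s).
Proof. by move=> i j; rewrite /chain_le -eqn_leq => /eqP/val_inj. Qed.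

Lemma vee2_le_anti : antisymmetric vee2_le.
Proof.
move=> i j /andP[/orP[/eqP//|/eqP i0] /orP[/eqP//|/eqP j0]].
by apply: ord_inj; rewrite i0 j0.
Qed.

Lemma induced_copy_imset (T : finType) (le : rel T) n N (h : 'I_n -> 'I_N)
    (f : T -> {set 'I_n}) :
  injective h -> induced_copy le f -> induced_copy le (fun x => h @: f x).
Proof.
move=> h_inj [f_inj f_sub]; split; first exact: inj_comp (imset_inj h_inj) f_inj.
by move=> x y; rewrite imset_subset_inj.
Qed.

Lemma segments_chain N s (g : 'I_s -> nat) :
  (forall i j : 'I_s, i < j -> g i < g j) -> (forall i, g i <= N) ->
  induced_copy (@chain_le s) (fun i => [set j : 'I_N | j < g i]).
Proof.
move=> g_mono g_le.
have seg_sub (i j : 'I_s) :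
    ([set x : 'I_N | x < g i] \subset [set x : 'I_N | x < g j]) = chain_le i j.
  rewrite /chain_le; case: (leqP i j) => [ij|ji].
  - have gij : g i <= g j.
      by move: ij; rewrite leq_eqVlt => /orP[/eqP/val_inj -> //|/g_mono/ltnW].
    by apply/subsetP => x; rewrite !inE => xi; exact: leq_trans xi gij.
  - have gjN : g j < N := leq_trans (g_mono _ _ ji) (g_le i).
    by apply/subsetPn; exists (Ordinal gjN); rewrite !inE /= ?ltnn ?g_mono.
split=> //; exact: embedding_inj (@chain_le_anti s) seg_sub.
Qed.

Lemma increasing_of_count N s (P : pred nat) : s <= count P (iota 0 N) ->
  exists g : 'I_s -> nat, [/\ forall i j : 'I_s, i < j -> g i < g j,
     forall i, g i < N & forall i, P (g i)].
Proof.
move=> sP; pose L := filter P (iota 0 N).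
have L_sorted : sorted ltn L := sorted_filter ltn_trans _ (iota_ltn_sorted 0 N).
have inL (i : 'I_s) : nth 0 L i \in L.
  by apply: mem_nth; rewrite size_filter (leq_trans (ltn_ord i) sP).
exists (fun i => nth 0 L i); split.
- move=> i j ij; apply: (sorted_ltn_nth ltn_trans) => //; rewrite inE size_filter;
  exact: leq_trans (ltn_ord _) sP.
- by move=> i; move: (inL i); rewrite mem_filter mem_iota => /and3P[].
- by move=> i; move: (inL i); rewrite mem_filter => /andP[].
Qed.

Lemma chain_card N s (f : 'I_s.+1 -> {set 'I_N}) :
  induced_copy (@chain_le s.+1) f -> #|f ord0| + s <= #|f ord_max|.
Proof.
move=> [f_inj f_sub].
have card_lt (i j : 'I_s.+1) : i < j -> #|f i| < #|f j|.
  move=> ij; apply: proper_card; rewrite properEneq f_sub /chain_le (ltnW ij) andbT.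
  by apply: contraTneq ij => /f_inj ->; rewrite ltnn.
suff: forall i : 'I_s.+1, #|f ord0| + i <= #|f i| by apply.
case=> i; elim: i => [|i IH] lti.
  by rewrite addn0 (_ : Ordinal lti = ord0) //; apply: val_inj.
rewrite addnS; apply: leq_ltn_trans (IH (ltnW lti)) _.
exact: card_lt (Ordinal (ltnW lti)) (Ordinal lti) (ltnSn i).
Qed.

Lemma vee2_nontop (T : finType) (X0 X1 X2 : {set T}) :
  X0 \subset X1 -> X0 \subset X2 -> ~~ (X1 \subset X2) -> ~~ (X2 \subset X1) ->
  [/\ X0 != setT, X1 != setT & X2 != setT].
Proof.
move=> s01 s02 n12 n21.
have X1T : X1 != setT by apply: contraNneq n21 => ->; exact: subsetT.
have X2T : X2 != setT by apply: contraNneq n12 => ->; exact: subsetT.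
by split=> //; apply: contraNneq X1T => X0T; rewrite -subTset -X0T.
Qed.

Section Coloring.

Variables (k N : nat) (c : {set 'I_N} -> 'I_k).

Definition special (X : {set 'I_N}) := (X != setT) && (c X != c set0).

Definition special_colors := [set c X | X in special].

Lemma card_special_colors : exact_coloring c -> k - 2 <= #|special_colors|.
Proof.
move=> c_exact.
have sub : ~: [set c set0; c setT] \subset special_colors.
  apply/subsetP => i; rewrite !inE negb_or => /andP[i0 iT].
  have [X cX] := c_exact i; apply/imsetP; exists X => //.
  by rewrite unfold_in /special cX i0 andbT; apply: contraNneq iT => XT; rewrite -cX XT.
have := subset_leq_card sub; have := cardsC [set c set0; c setT].
have : #|[set c set0; c setT]| <= 2 by rewrite cards2; case: (_ != _).
rewrite card_ord; lia.
Qed.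

Lemma rainbow_vee2P : rainbow_copy c vee2_le <->
  exists X0 X1 X2 : {set 'I_N}, [/\ X0 \subset X1, X0 \subset X2, ~~ (X1 \subset X2),
    ~~ (X2 \subset X1) & [/\ c X0 != c X1, c X0 != c X2 & c X1 != c X2]].
Proof.
split=> [[f [[_ f_sub] c_inj]]|[X0 [X1 [X2 [s01 s02 n12 n21 [d01 d02 d12]]]]]].
  exists (f (Ordinal (isT : 0 < 3))), (f (Ordinal (isT : 1 < 3))), (f (Ordinal (isT : 2 < 3))).
  by rewrite !f_sub; split=> //; split; apply/eqP => /c_inj.
pose f (i : 'I_3) := nth X0 [:: X0; X1; X2] i.
have n10 : ~~ (X1 \subset X0) by apply: contraNN n12 => /subset_trans; apply.
have n20 : ~~ (X2 \subset X0) by apply: contraNN n21 => /subset_trans; apply.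
have f_sub x y : (f x \subset f y) = vee2_le x y.
  case: x y => [[|[|[|x]]] hx] [[|[|[|y]]] hy] //; rewrite /f /vee2_le /= ?subxx //;
  exact: negbTE.
exists f; split; first by split=> //; exact: embedding_inj vee2_le_anti f_sub.
have c_uniq : uniq [:: c X0; c X1; c X2] by rewrite /= !inE negb_or d01 d02 d12.
move=> i j /eqP; rewrite /f -!(nth_map X0 (c X0)) ?size_tuple //.
by rewrite nth_uniq // => /eqP/val_inj.
Qed.

Section NoRainbow.

Hypothesis no_rainbow : ~ rainbow_copy c vee2_le.

Lemma vee2_color_collision (X0 X1 X2 : {set 'I_N}) :
  X0 \subset X1 -> X0 \subset X2 -> ~~ (X1 \subset X2) -> ~~ (X2 \subset X1) ->
  [\/ c X0 = c X1, c X0 = c X2 | c X1 = c X2].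
Proof.
move=> s01 s02 n12 n21.
case: (eqVneq (c X0) (c X1)) => [|d01]; first by constructor 1.
case: (eqVneq (c X0) (c X2)) => [|d02]; first by constructor 2.
case: (eqVneq (c X1) (c X2)) => [|d12]; first by constructor 3.
by case: no_rainbow; apply/rainbow_vee2P; exists X0, X1, X2.
Qed.

Lemma comparable_of_colors (X Y : {set 'I_N}) :
  c X != c set0 -> c Y != c set0 -> c X != c Y -> (X \subset Y) || (Y \subset X).
Proof.
move=> cX cY cXY; apply/negPn/negP; rewrite negb_or => /andP[nXY nYX].
case: (vee2_color_collision (sub0set X) (sub0set Y) nXY nYX) => e.
- by rewrite e eqxx in cX.
- by rewrite e eqxx in cY.
- by rewrite e eqxx in cXY.
Qed.

(* Adding to [B] a point outside [C] yields a set incomparable with [C]; the two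
   vee's below [C] and [x |: B], with bottoms [set0] and [B], force its colour. *)
Lemma color_setU1 (B C : {set 'I_N}) x : B \subset C ->
  c B != c set0 -> c C != c set0 -> c B != c C -> x \notin C -> c (x |: B) = c C.
Proof.
move=> sBC cB cC cBC xC.
have nDC : ~~ (x |: B \subset C) by apply: contraNN xC => /subsetP; apply; exact: setU11.
have nCD : ~~ (C \subset x |: B).
  rewrite subsetU1_notin //; apply: contraNN cBC => sCB.
  by rewrite (_ : B = C) //; apply/eqP; rewrite eqEsubset sBC.
case: (vee2_color_collision (sub0set C) (sub0set (x |: B)) nCD nDC) => [c0C|c0D|//].
  by rewrite c0C eqxx in cC.
case: (vee2_color_collision sBC (subsetUr _ _) nCD nDC) => [cBC'|cBD|//].
  by rewrite cBC' eqxx in cBC.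
by rewrite cBD -c0D eqxx in cB.
Qed.

Lemma no_three_special_colors (X Y Z : {set 'I_N}) :
  special X -> special Y -> special Z -> c X != c Y -> c X != c Z -> c Y != c Z -> False.
Proof.
have fork (A B C : {set 'I_N}) : special A -> special B -> special C ->
    c A != c B -> c A != c C -> c B != c C -> A \subset B -> A \subset C -> False.
  move=> /andP[_ cA] /andP[BT cB] /andP[CT cC] cAB cAC cBC sAB sAC.
  have [x] : exists x, x \notin B :|: C.
    apply/setTPn; by case/orP: (comparable_of_colors cB cC cBC) => [/setUidPr|/setUidPl] ->.
  rewrite in_setU negb_or => /andP[xB xC].
  by move: cBC; rewrite -(color_setU1 sAB cA cB cAB xB) (color_setU1 sAC cA cC cAC xC) eqxx.
move=> sX sY sZ cXY cXZ cYZ.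
move: (sX) (sY) (sZ) => /andP[_ cX] /andP[_ cY] /andP[_ cZ].
case/orP: (comparable_of_colors cX cY cXY) => [sXY|sYX].
  case/orP: (comparable_of_colors cX cZ cXZ) => [sXZ|sZX]; first exact: (fork X Y Z).
  by apply: (fork Z X Y) (subset_trans sZX sXY); rewrite // eq_sym.
case/orP: (comparable_of_colors cY cZ cYZ) => [sYZ|sZY].
  by apply: (fork Y X Z) sYX sYZ; rewrite // eq_sym.
by apply: (fork Z Y X) sZY (subset_trans sZY sYX); rewrite // eq_sym.
Qed.

(* A smallest special set [m] lies below every special set: those coloured
   differently by comparability, those coloured like [m] because they are
   comparable both with a special [D] of another colour and with [x |: m],
   [x \notin D], which [color_setU1] colours like [D]. *)
Lemma special_common_point (B C : {set 'I_N}) :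
  special B -> special C -> c B != c C -> exists y, forall X, special X -> y \in X.
Proof.
move=> sB sC cBC.
case: (arg_minnP (fun X : {set 'I_N} => #|X|) sB) => m sm m_min.
have m_sub X : special X -> X \subset m -> X = m.
  by move=> sX sXm; apply/eqP; rewrite eqEcard sXm m_min.
move: (sm) => /andP[_ cm].
have above_m X : special X -> c X != c m -> m \subset X.
  move=> sX cXm; move: (sX) => /andP[_ cX].
  case/orP: (comparable_of_colors cX cm cXm) => // sXm.
  by rewrite (m_sub X sX sXm) eqxx in cXm.
have [D sD cDm] : exists2 D, special D & c D != c m.
  by case: (eqVneq (c B) (c m)) => [<-|]; [exists C; rewrite // eq_sym | exists B].
move: (sD) => /andP[DT cD]; have sDm := above_m D sD cDm.
have /setTPn [x xD] := DT.
have cxm : c (x |: m) = c D by apply: color_setU1; rewrite // eq_sym.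
have [y ym] : exists y, y \in m by apply/set0Pn; apply: contraNneq cm => ->.
exists y => X sX; apply: (subsetP _ y ym).
case: (eqVneq (c X) (c m)) => [cXm|]; last exact: above_m.
move: (sX) => /andP[_ cX].
have cDX : c D != c X by rewrite cXm.
case/orP: (comparable_of_colors cD cX cDX) => [|sXD]; first exact: subset_trans sDm.
have xX : x \notin X by apply: contraNN xD; exact: (subsetP sXD).
have cxm0 : c (x |: m) != c set0 by rewrite cxm.
have cxX : c (x |: m) != c X by rewrite cxm.
case/orP: (comparable_of_colors cxm0 cX cxX); first exact: subset_trans (subsetU1 x m).
by rewrite subsetU1_notin // => /(m_sub X sX) ->.
Qed.

Lemma three_le_of_special (B C : {set 'I_N}) :
  special B -> special C -> c B != c C -> 3 <= N.
Proof.
wlog sBC : B C / B \subset C => [hyp sB sC cBC|].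
  move: (sB) (sC) => /andP[_ cB] /andP[_ cC].
  case/orP: (comparable_of_colors cB cC cBC) => s; first exact: hyp s sB sC cBC.
  by apply: (hyp C B) => //; rewrite eq_sym.
move=> /andP[_ cB] /andP[CT _] cBC.
have p0B : set0 \proper B by rewrite properEneq sub0set andbT eq_sym; apply: contraNneq cB => ->.
have pBC : B \proper C by rewrite properEneq sBC andbT; apply: contraNneq cBC => ->.
have := proper_card p0B; have := proper_card pBC; have := card_lt_nontop CT.
rewrite cards0; lia.
Qed.

End NoRainbow.

End Coloring.

Lemma mono_chain_avoiding k N s (c : {set 'I_N} -> 'I_k) (y : 'I_N) :
  s <= N -> (forall X, special c X -> y \in X) -> mono_copy c (@chain_le s).
Proof.
case: N c y => [|n] c y sN y_common; first by case: y y_common.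
pose f (i : 'I_s) := lift y @: [set j : 'I_n | j < i].
have y_notin i : y \notin f i by apply/imsetP => -[j _ /eqP]; rewrite (negbTE (neq_lift y j)).
have c0 i : c (f i) = c set0.
  apply/eqP; apply: contraNT (y_notin i) => cfi; apply: y_common.
  by rewrite /special cfi andbT; apply: contraNneq (y_notin i) => ->; exact: in_setT.
exists f; split; last by move=> i j; rewrite !c0.
apply: induced_copy_imset; first exact: lift_inj.
by apply: segments_chain => // i; have := ltn_ord i; lia.
Qed.

Lemma mono_segments_of_count k N s (c : {set 'I_N} -> 'I_k) (P : pred nat) :
  s <= count P (iota 0 N) ->
  (forall m n, m < N -> n < N -> P m -> P n ->
     c [set j : 'I_N | j < m] = c [set j : 'I_N | j < n]) ->
  mono_copy c (@chain_le s).
Proof.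
move=> sP c_P; have [g [g_mono g_lt g_P]] := increasing_of_count sP.
exists (fun i => [set j : 'I_N | j < g i]); split; last by move=> i j; apply: c_P.
by apply: segments_chain => // i; exact: ltnW.
Qed.

(* Either two special sets differ in colour and a common point gives a chain of
   colour [c set0], or the non-top initial segments carry only two colours and
   one of them is used [s] times. *)
Lemma GR3_upper s N : 2 * s - 1 <= N -> GR_prop 3 vee2_le (@chain_le s) N.
Proof.
move=> sN c _; case: (classic (rainbow_copy c vee2_le)) => [|no_rainbow]; [by left|right].
case: (classic (exists B C, [/\ special c B, special c C & c B != c C])) =>
  [[B [C [sB sC cBC]]]|one_color].
  have [y y_common] := special_common_point no_rainbow sB sC cBC.
  by apply: mono_chain_avoiding y_common; lia.
pose P n := c [set j : 'I_N | j < n] == c set0.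
have := count_predC P (iota 0 N); rewrite size_iota.
case: (leqP s (count P (iota 0 N))) => [sP|sPC] cnt.
  by apply: (mono_segments_of_count sP) => m n _ _ /eqP-> /eqP->.
apply: (mono_segments_of_count (P := predC P)); first lia.
move=> m n mN nN /= cm cn; apply/eqP/negPn/negP => cmn; apply: one_color.
have seg_special l : l < N -> ~~ P l -> special c [set j : 'I_N | j < l].
  move=> lN cl; rewrite /special cl andbT; apply/setTPn.
  by exists (Ordinal lN); rewrite inE ltnn.
exists [set j : 'I_N | j < m], [set j : 'I_N | j < n].
by split; [exact: seg_special mN cm | exact: seg_special nN cn |].
Qed.

Lemma GR4_upper k s N : 4 <= k -> s <= maxn 3 N -> GR_prop k vee2_le (@chain_le s) N.
Proof.
move=> k4 sN c c_exact; case: (classic (rainbow_copy c vee2_le)) => [|no_rainbow]; [by left|right].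
have : 1 < #|special_colors c| by have := card_special_colors c_exact; lia.
case/card_gt1P => _ [_ [/imsetP[B sB ->] /imsetP[C sC ->] cBC]].
have N3 := three_le_of_special no_rainbow sB sC cBC.
have [y y_common] := special_common_point no_rainbow sB sC cBC.
by apply: mono_chain_avoiding y_common; lia.
Qed.

Lemma rainbow_of_five_colors k N (c : {set 'I_N} -> 'I_k) :
  5 <= k -> exact_coloring c -> rainbow_copy c vee2_le.
Proof.
move=> k5 c_exact; apply: NNPP => no_rainbow.
have : 2 < #|special_colors c| by have := card_special_colors c_exact; lia.
case/card_gt2P => _ [_ [_ [[/imsetP[X sX ->] /imsetP[Y sY ->] /imsetP[Z sZ ->]] [cXY cYZ cZX]]]].
by apply: (no_three_special_colors no_rainbow sX sY sZ cXY) cYZ; rewrite eq_sym.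
Qed.

Definition level_coloring k N (h : {set 'I_N} -> nat) (X : {set 'I_N}) : 'I_k.+1 :=
  inord (h X).

Lemma level_coloring_eq k N (h : {set 'I_N} -> nat) X Y : (forall Z, h Z <= k) ->
  (level_coloring k h X == level_coloring k h Y) = (h X == h Y).
Proof. by move=> h_le; rewrite -val_eqE /= !inordK ?ltnS. Qed.

Lemma level_coloring_exact k N (h : {set 'I_N} -> nat) :
  (forall l, l <= k -> exists X, h X = l) -> exact_coloring (level_coloring k h).
Proof.
move=> h_onto i; have [X hX] := h_onto i (ltn_ord i).
by exists X; apply: val_inj; rewrite /= /level_coloring hX inordK.
Qed.

Lemma mono_chain_nontop k N s (c : {set 'I_N} -> 'I_k) (f : 'I_s -> {set 'I_N}) :
  1 < s -> (forall X, c X = c setT -> X = setT) -> induced_copy (@chain_le s) f ->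
  (forall i j, c (f i) = c (f j)) -> forall i, f i != setT.
Proof.
move=> s_gt1 top_unique [f_inj _] f_mono i; apply/eqP => fiT.
have fT j : f j = setT by apply: top_unique; rewrite (f_mono j i) fiT.
by move: (f_inj (Ordinal (ltnW s_gt1)) (Ordinal s_gt1)); rewrite !fT => /(_ erefl)/(congr1 val).
Qed.

Definition size_level s N (X : {set 'I_N}) : nat :=
  if X == setT then 2 else if #|X| < s then 0 else 1.

Lemma GR3_lower s : 0 < s -> ~ GR_prop 3 vee2_le (@chain_le s.+1) (2 * s).
Proof.
move=> s_gt0 GR; pose h := @size_level s (2 * s); pose c := level_coloring 2 h.
have h_le X : h X <= 2 by rewrite /h /size_level; case: ifP => //; case: ifP.
have h_nontop X : X != setT -> h X <= 1.
  by rewrite /h /size_level => /negbTE->; case: ifP.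
have c_eq X Y : (c X == c Y) = (h X == h Y) := level_coloring_eq X Y h_le.
have top_unique X : c X = c setT -> X = setT.
  by move/eqP; rewrite c_eq /h /size_level eqxx; case: (X =P setT) => [//|_]; case: ifP.
have s2_gt0 : 0 < 2 * s by lia.
have c_exact : exact_coloring c.
  apply: level_coloring_exact => -[|[|[|//]]] _; rewrite /h /size_level.
  - exists set0; rewrite ifN ?cards0 ?s_gt0 //.
    by apply/setTPn; exists (Ordinal s2_gt0); rewrite inE.
  - exists [set~ Ordinal s2_gt0]; rewrite ifN; last first.
      by apply/setTPn; exists (Ordinal s2_gt0); rewrite !inE eqxx.
    by rewrite cardsC1 card_ord; case: ifP => //; lia.
  - by exists setT; rewrite eqxx.
case: (GR c c_exact) =>
  [/rainbow_vee2P[X0 [X1 [X2 [s01 s02 n12 n21 [d01 d02 d12]]]]]|[f [f_copy f_mono]]].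
  have [T0 T1 T2] := vee2_nontop s01 s02 n12 n21.
  move: d01 d02 d12; rewrite !c_eq.
  by have := h_nontop _ T0; have := h_nontop _ T1; have := h_nontop _ T2; lia.
have f_nontop := mono_chain_nontop (s := s.+1) s_gt0 top_unique f_copy f_mono.
have := chain_card f_copy; have := card_lt_nontop (f_nontop ord_max).
move: (f_mono ord0 ord_max) => /eqP; rewrite c_eq /h /size_level !(negbTE (f_nontop _)).
by case: ifP; case: ifP; lia.
Qed.

Definition point_level N (y : 'I_N) (X : {set 'I_N}) : nat :=
  if X == setT then 3 else if X == [set y] then 1 else if y \in X then 2 else 0.

(* The bottom of a rainbow vee must avoid [y] (otherwise all three levels are
   positive), so one of the two upper sets is [set y] and lies below the other. *)
Lemma point_level_vee2 N (y : 'I_N) (X0 X1 X2 : {set 'I_N}) :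
  X0 \subset X1 -> X0 \subset X2 -> ~~ (X1 \subset X2) -> ~~ (X2 \subset X1) ->
  point_level y X0 != point_level y X1 -> point_level y X0 != point_level y X2 ->
  point_level y X1 != point_level y X2 -> False.
Proof.
move=> s01 s02 n12 n21; set h := point_level y.
have h_nontop X : X != setT -> h X <= 2.
  by rewrite /h /point_level => /negbTE->; case: ifP => //; case: ifP.
have h_pos X : X != setT -> (0 < h X) = (y \in X).
  rewrite /h /point_level => /negbTE->; case: eqP => [->|_]; first by rewrite set11.
  by case: ifP.
have h_one X : h X = 1 -> X = [set y].
  by rewrite /h /point_level; case: ifP => // _; case: eqP => // _; case: ifP.
have [T0 T1 T2] := vee2_nontop s01 s02 n12 n21.
have := h_nontop _ T0; have := h_nontop _ T1; have := h_nontop _ T2.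
case: (boolP (y \in X0)) => yX0.
  have := h_pos _ T0; have := h_pos _ T1; have := h_pos _ T2.
  by rewrite yX0 (subsetP s01 _ yX0) (subsetP s02 _ yX0); lia.
have := h_pos _ T0; rewrite (negbTE yX0) => h0 h2 h1 h0' d01 d02 d12.
have [h11|h21] : h X1 = 1 \/ h X2 = 1 by lia.
  have yX2 : y \in X2 by rewrite -h_pos //; lia.
  by move: n12; rewrite (h_one _ h11) sub1set yX2.
have yX1 : y \in X1 by rewrite -h_pos //; lia.
by move: n21; rewrite (h_one _ h21) sub1set yX1.
Qed.

Lemma GR4_lower s : 3 <= s -> ~ GR_prop 4 vee2_le (@chain_le s.+1) s.
Proof.
move=> s3 GR.
have [lt0s lt1s lt2s] : [/\ 0 < s, 1 < s & 2 < s] by split; lia.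
pose y := Ordinal lt0s; pose h := point_level y; pose c := level_coloring 3 h.
have h_le X : h X <= 3 by rewrite /h /point_level; do 3 case: ifP => // _.
have c_eq X Y : (c X == c Y) = (h X == h Y) := level_coloring_eq X Y h_le.
have top_unique X : c X = c setT -> X = setT.
  move/eqP; rewrite c_eq /h /point_level eqxx.
  by case: (X =P setT) => [//|_]; case: ifP => // _; case: ifP.
have c_exact : exact_coloring c.
  apply: level_coloring_exact => -[|[|[|[|//]]]] _; rewrite /h /point_level.
  - exists set0; rewrite inE ifN; last by apply/setTPn; exists y; rewrite inE.
    by rewrite ifN //; apply/eqP => /setP/(_ y); rewrite !inE eqxx.
  - exists [set y]; rewrite eqxx ifN //.
    by apply/setTPn; exists (Ordinal lt1s); rewrite inE.
  - exists [set y; Ordinal lt1s]; rewrite !inE eqxx ifN; last first.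
      by apply/setTPn; exists (Ordinal lt2s); rewrite !inE.
    by rewrite ifN //; apply/eqP => /setP/(_ (Ordinal lt1s)); rewrite !inE.
  - by exists setT; rewrite eqxx.
case: (GR c c_exact) =>
  [/rainbow_vee2P[X0 [X1 [X2 [s01 s02 n12 n21 [d01 d02 d12]]]]]|[f [f_copy f_mono]]].
  by move: d01 d02 d12; rewrite !c_eq; exact: point_level_vee2 s01 s02 n12 n21.
have f_nontop := mono_chain_nontop (s := s.+1) (ltnW lt1s) top_unique f_copy f_mono.
by have := chain_card f_copy; have := card_lt_nontop (f_nontop ord_max); lia.
Qed.

Lemma GR_eq_succ k (TQ : finType) (leQ : rel TQ) (TP : finType) (leP : rel TP) n :
  0 < n -> ~ GR_prop k leQ leP n -> (forall N, n < N -> GR_prop k leQ leP N) ->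
  GR_eq k leQ leP n.+1.
Proof.
move=> n_gt0 not_n above; split; [|split] => // [good_kQP|m above_m].
  exact/not_n/good_kQP.
by case: (leqP m n) => // mn; case: not_n; exact: above_m.
Qed.

Theorem theorem1p3 :
  (forall s : nat, (2 <= s)%N ->
     GR_eq 3 vee2_le (@chain_le s) (2 * s - 1)) /\
  (good 4 vee2_le (@chain_le 2) /\ good 4 vee2_le (@chain_le 3) /\
   forall s : nat, (4 <= s)%N -> GR_eq 4 vee2_le (@chain_le s) s) /\
  (forall k s : nat, (5 <= k)%N -> (2 <= s)%N -> good k vee2_le (@chain_le s)).
Proof.
split; [|split; [split; [|split]|]].
- case=> [//|s] s2; rewrite (_ : 2 * s.+1 - 1 = (2 * s).+1); last by lia.
  apply: GR_eq_succ; [lia | apply: GR3_lower; lia | move=> N sN].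
  by apply: GR3_upper; lia.
- by move=> N _; apply: GR4_upper; rewrite // leq_max.
- by move=> N _; apply: GR4_upper; rewrite // leq_max.
- case=> [//|s] s4; apply: GR_eq_succ; [lia | apply: GR4_lower; lia | move=> N sN].
  by apply: GR4_upper; lia.
- by move=> k s k5 _ N _ c c_exact; left; exact: rainbow_of_five_colors.
Qed.
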